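(* Let $a\in[0,\infty)$ and let $t:[0,1]\to[0,\infty]$ and $s:[0,\infty]\to[0,1]$ be continuous and increasing functions such that (1) $s(x)=0$ if and only if $x\in[0,a]$, and (2) the function $G_{t,s}:[0,1]^2\to[0,1]$, $G_{t,s}(x,y)=s(t(x)+t(y))$, is a grouping function. Then $t(x)=\frac{a}{2}$ if and only if $x=0$.
   Context: ''Increasing'' means non-decreasing. Arithmetic in $[0,\infty]$ uses $c+\infty=\infty$; continuity on $[0,\infty]$ refers to the usual topology of the extended half-line. A grouping function is a map $G:[0,1]^2\to[0,1]$ that is (G1) commutative, (G2) $G(x,y)=0$ iff $x=y=0$, (G3) $G(x,y)=1$ iff $x=1$ or $y=1$, (G4) increasing in each variable, (G5) continuous. *)

From HB Require Import structures.
From mathcomp Require Import all_boot all_order all_algebra.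
From mathcomp Require Import all_classical all_reals all_analysis.
Set Implicit Arguments. Unset Strict Implicit. Unset Printing Implicit Defensive.
Import Order.TTheory GRing.Theory Num.Theory.
Import numFieldNormedType.Exports.
Local Open Scope classical_set_scope.
Local Open Scope ring_scope.

Definition unit_itv {R : realType} : set R := [set x | 0 <= x <= 1].

Definition unit_sq {R : realType} : set (R * R) :=
  [set p | unit_itv p.1 /\ unit_itv p.2].

(* Grouping function G : [0,1]^2 -> [0,1] (values outside [0,1]^2 irrelevant). *)
Definition grouping_function (R : realType) (G : R -> R -> R) : Prop :=
  (forall x y, unit_itv x -> unit_itv y -> unit_itv (G x y)) /\
      (forall x y, unit_itv x -> unit_itv y -> G x y = G y x) /\
      (forall x y, unit_itv x -> unit_itv y -> (G x y = 0 <-> x = 0 /\ y = 0)) /\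
      (forall x y, unit_itv x -> unit_itv y -> (G x y = 1 <-> x = 1 \/ y = 1)) /\
      (forall x y z, unit_itv x -> unit_itv y -> unit_itv z ->
          y <= z -> G x y <= G x z /\ G y x <= G z x) /\
      {within unit_sq, continuous (fun p : R * R => G p.1 p.2)}.

From HB Require Import structures.
From mathcomp Require Import all_boot all_order all_algebra.
From mathcomp Require Import all_classical all_reals all_analysis.
From mathcomp Require Import lra.
Import Order.TTheory GRing.Theory Num.Theory.
Import numFieldNormedType.Exports.
Local Open Scope classical_set_scope.
Local Open Scope ring_scope.

(** Conditions (1) and (G2) together say that [t x + t y <= a] holds exactly
    when [x = y = 0].  At [x = y = 0] this gives [2 t(0) <= a]; were the
    inequality strict, continuity of [t] at [0] would yield some [y > 0] with
    [t y + t 0 <= a].  Hence [t 0 = a/2], and conversely [t x = a/2] gives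
    [t x + t x = a], so [x = 0]. *)

Lemma unit_itv0 (R : realType) : unit_itv (0 : R).
Proof. by rewrite /unit_itv /= lexx ler01. Qed.

Lemma unit_itv_continuous0_nbhs {R : realType} {T : topologicalType}
    {f : R -> T} {P : set T} :
  {within unit_itv, continuous f} -> nbhs (f 0) P ->
  exists2 y, 0 < y <= 1 & P (f y).
Proof.
move=> cf Pf0.
have : within unit_itv (nbhs (0 : R)) (P \o f).
  by rewrite nbhs_subspace_in; [exact: cf 0 P Pf0 | exact: unit_itv0].
move=> /nbhs_ballP[e /= e0 Pfe].
have y0 : 0 < Num.min (e / 2) 1 by rewrite lt_min ltr01 divr_gt0.
exists (Num.min (e / 2) 1); first by rewrite y0 ge_min lexx orbT.
apply: Pfe; last by rewrite /unit_itv /= (ltW y0) ge_min lexx orbT.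
rewrite /ball /= sub0r normrN gtr0_norm // gt_min.
by rewrite ltr_pdivrMr // ltr_pMr // ltr1n.
Qed.

Section ZeroLevel.
Variables (R : realType) (a : R) (t : R -> \bar R).
Hypothesis t_ge0 : forall x, unit_itv x -> (0 <= t x)%E.
Hypothesis t_cont : {within unit_itv, continuous t}.
Hypothesis sum_le_iff : forall x y, unit_itv x -> unit_itv y ->
  ((t x + t y <= a%:E)%E <-> x = 0 /\ y = 0).

Lemma t0_eq_half : t 0 = (a / 2)%:E.
Proof.
have I0 := unit_itv0 R.
have := t_ge0 _ I0; have := (sum_le_iff _ _ I0 I0).2 (conj erefl erefl).
case t0E : (t 0) => [c| |] //=; rewrite -EFinD !lee_fin => c2a c0.
congr EFin; apply/eqP; rewrite eq_le; apply/andP; split; first lra.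
rewrite leNgt; apply/negP => ca.
have tlt : (t 0 < (a - c)%:E)%E by rewrite t0E lte_fin; lra.
have [y /andP[y0 y1]] := unit_itv_continuous0_nbhs t_cont (open_ereal_lt' tlt).
have Iy : unit_itv y by rewrite /unit_itv /= (ltW y0) y1.
have := t_ge0 _ Iy; case tyE : (t y) => [r| |] //=; rewrite lte_fin => _ rac.
have : (t y + t 0 <= a%:E)%E by rewrite tyE t0E -EFinD lee_fin; lra.
by move/(sum_le_iff _ _ Iy I0) => [y0E _]; rewrite y0E ltxx in y0.
Qed.

Lemma t_eq_half_iff x : unit_itv x -> t x = (a / 2)%:E <-> x = 0.
Proof.
move=> Ix; split=> [txE | ->]; last exact: t0_eq_half.
have : (t x + t x <= a%:E)%E by rewrite txE -EFinD lee_fin; lra.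
by move/(sum_le_iff _ _ Ix Ix) => [].
Qed.

End ZeroLevel.

Theorem proposition6p1 (R : realType) (a : R) (t : R -> \bar R) (s : \bar R -> R) :
  0 <= a ->
  (* t : [0,1] -> [0,+oo], continuous and increasing *)
  (forall x, unit_itv x -> (0 <= t x)%E) ->
  {within unit_itv, continuous t} ->
  (forall x y, unit_itv x -> unit_itv y -> x <= y -> (t x <= t y)%E) ->
  (* s : [0,+oo] -> [0,1], continuous and increasing *)
  (forall u : \bar R, (0 <= u)%E -> unit_itv (s u)) ->
  {within [set u : \bar R | (0 <= u)%E], continuous s} ->
  (forall u v : \bar R, (0 <= u)%E -> (0 <= v)%E -> (u <= v)%E -> s u <= s v) ->
  (* (1) s(u) = 0 iff u in [0,a] *)
  (forall u : \bar R, (0 <= u)%E -> (s u = 0 <-> (u <= a%:E)%E)) ->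
  (* (2) G_{t,s} is a grouping function *)
  grouping_function (fun x y => s (t x + t y)%E) ->
  forall x, unit_itv x -> (t x = (a / 2)%:E <-> x = 0).
Proof.
move=> _ t_ge0 t_cont _ _ _ _ s_eq0 [_ [_ [G_eq0 _]]].
apply: t_eq_half_iff => // x y Ix Iy.
by rewrite -(G_eq0 _ _ Ix Iy) s_eq0 // adde_ge0 ?t_ge0.
Qed.
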